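(* Let $G_l$ be a graph of order $n_l$, maximum degree $\Delta_l$ and minimum degree $\delta_l$, $l\in\{1,2\}$. Then for $i,j\in\{1,2\}$ with $i\neq j$ and every integer $k\in\{2-\delta_j-\Delta_i,\dots,\Delta_i-\delta_j\}$, $$\phi_k^o(G_1\times G_2)\ge n_j\,\phi_{k+\delta_j}^o(G_i).$$
   Context: All graphs are finite and simple. For a graph $G=(V,E)$, a set $S\subseteq V$ and $v\in V$, let $\delta_S(v)=|\{u\in S: uv\in E\}|$, $\overline{S}=V\setminus S$, and let $\partial S$ be the set of vertices of $\overline S$ adjacent to at least one vertex of $S$. For an integer $k$, a non-empty set $S\subseteq V$ is an offensive $k$-alliance if $\delta_S(v)\ge \delta_{\overline S}(v)+k$ for every $v\in \partial S$. A set $X\subseteq V$ is an offensive $k$-alliance free set ($k$-oaf set) if no offensive $k$-alliance $S$ satisfies $S\subseteq X$. $\phi_k^o(G)$ denotes the maximum cardinality of a $k$-oaf set in $G$. The Cartesian product $G_1\times G_2$ of $G_1=(V_1,E_1)$, $G_2=(V_2,E_2)$ has vertex set $V_1\times V_2$, with $(a,b)$ adjacent to $(c,d)$ iff either $a=c$ and $bd\in E_2$, or $b=d$ and $ac\in E_1$. *)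

From HB Require Import structures.
From mathcomp Require Import all_boot all_order all_algebra.
Set Implicit Arguments. Unset Strict Implicit. Unset Printing Implicit Defensive.
Import Order.TTheory GRing.Theory Num.Theory.

Definition simple_graph (T : finType) (e : rel T) : Prop :=
  symmetric e /\ irreflexive e.

Definition nbr_in (T : finType) (e : rel T) (S : {set T}) (v : T) : nat :=
  #|[set u in S | e u v]|.

Definition degree (T : finType) (e : rel T) (v : T) : nat := nbr_in e setT v.

(* maximum and minimum degree (min over empty vertex set defaults to #|T| = 0) *)
Definition maxdeg (T : finType) (e : rel T) : nat := \max_(v : T) degree e v.
Definition mindeg (T : finType) (e : rel T) : nat :=
  \big[minn/#|T|]_(v : T) degree e v.

Definition boundary (T : finType) (e : rel T) (S : {set T}) : {set T} :=
  [set v in ~: S | [exists u in S, e u v]].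

Definition off_alliance (T : finType) (e : rel T) (k : int) (S : {set T}) : bool :=
  (S != set0) &&
  [forall v in boundary e S,
     ((nbr_in e (~: S) v)%:Z + k <= (nbr_in e S v)%:Z)%R].

Definition oaf_set (T : finType) (e : rel T) (k : int) (X : {set T}) : bool :=
  [forall S : {set T}, (S \subset X) ==> ~~ off_alliance e k S].

Definition phi_o (T : finType) (e : rel T) (k : int) : nat :=
  \max_(X : {set T} | oaf_set e k X) #|X|.

Definition cart_rel (T1 T2 : finType) (e1 : rel T1) (e2 : rel T2) : rel (T1 * T2) :=
  [rel x y | ((x.1 == y.1) && e2 x.2 y.2) || ((x.2 == y.2) && e1 x.1 y.1)].

From HB Require Import structures.
From mathcomp Require Import all_boot all_order all_algebra.
From mathcomp Require Import zify.
Import Order.TTheory GRing.Theory Num.Theory.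

Set Implicit Arguments.
Unset Strict Implicit.
Unset Printing Implicit Defensive.

(* Let X be a maximum (k + delta_j)-oaf set of G_i.  We show that the
   "cylinder" X x V_j is a k-oaf set of the product, which has n_j * |X|
   vertices.  Suppose S is an offensive k-alliance inside X x V_j and let
   A be its shadow (projection) on V_i; A is a non-empty subset of X, so
   some v in the boundary of A violates the (k + delta_j)-alliance
   inequality.  Pick a neighbour u of v in A and b with (u,b) in S; then
   w = (v,b) lies on the boundary of S.  No vertex of the fibre {v} x V_j
   is in S, so the neighbours of w in S are among (c,b), c in N_A(v),
   while its neighbours outside S include every (a,b), a in N_{~A}(v),
   and every (v,d), d in N(b).  Hence the k-alliance inequality at w
   gives the (k + delta_j)-alliance inequality at v: a contradiction.

   The argument is carried out for any graph E whose vertex set is in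
   bijection with T x T' so that E is the Cartesian product of e and e';
   both orientations of the theorem are then instances, via the identity
   and via the swap of coordinates. *)

Lemma mindeg_le_degree (T : finType) (e : rel T) (v : T) :
  mindeg e <= degree e v.
Proof. by have := bigmin_le #|T| v (degree e); rewrite Order.NatOrder.minEnat. Qed.

Lemma oaf_set0 (T : finType) (e : rel T) (k : int) : oaf_set e k set0.
Proof.
apply/forallP => S; apply/implyP; rewrite subset0 => /eqP ->.
by rewrite /off_alliance eqxx.
Qed.

Section CartesianProduct.

Variables (T T' P : finType) (e : rel T) (e' : rel T') (E : rel P).

Variables (f : T * T' -> P) (g : P -> T * T').
Hypotheses (fK : cancel f g) (gK : cancel g f).
Hypothesis E_cart : forall a b c d,
  E (f (a, b)) (f (c, d)) = ((b == d) && e a c) || ((a == c) && e' b d).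
Hypothesis e'_irr : irreflexive e'.

Definition shadow (S : {set P}) : {set T} := [set a | [exists b, f (a, b) \in S]].

Lemma mem_shadow (S : {set P}) a b : f (a, b) \in S -> a \in shadow S.
Proof. by move=> abS; rewrite inE; apply/existsP; exists b. Qed.

Lemma notin_shadow (S : {set P}) v d : v \notin shadow S -> f (v, d) \notin S.
Proof. by apply: contra => /mem_shadow. Qed.

Lemma shadow_sub (X : {set T}) (S : {set P}) :
  S \subset f @: setX X setT -> shadow S \subset X.
Proof.
move=> sSX; apply/subsetP => a; rewrite inE => /existsP [b /(subsetP sSX)].
by case/imsetP => -[c d]; rewrite inE /= => /andP [cX _] /(can_inj fK) [->].
Qed.

Lemma shadow_neq0 (S : {set P}) : S != set0 -> shadow S != set0.
Proof.
case/set0Pn => x xS; apply/set0Pn; exists (g x).1.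
by apply: (mem_shadow (b := (g x).2)); rewrite -surjective_pairing gK.
Qed.

(* If the fibre of v misses S, the S-neighbours of (v,b) all lie in the
   layer of b, above S-neighbours of v in the shadow. *)
Lemma nbr_in_layer (S : {set P}) v b :
  v \notin shadow S -> nbr_in E S (f (v, b)) <= nbr_in e (shadow S) v.
Proof.
move=> vA; apply: leq_trans (leq_imset_card (fun c => f (c, b)) _).
apply: subset_leq_card; apply/subsetP => x; rewrite inE.
rewrite -(gK x); case: (g x) => c d; rewrite E_cart.
case/andP=> cdS /orP [/andP [/eqP -> evc] | /andP [/eqP cv _]].
  by apply: imset_f; rewrite inE evc (mem_shadow cdS).
by move: (notin_shadow d vA); rewrite -cv cdS.
Qed.

(* If the fibre of v misses S, then outside S the vertex (v,b) sees both
   the layer-neighbours (a,b) with a outside the shadow and the whole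
   fibre-neighbourhood {v} x N(b); these are disjoint as e' is loopless. *)
Lemma nbr_out_layer (S : {set P}) v b :
  v \notin shadow S ->
  nbr_in e (~: shadow S) v + degree e' b <= nbr_in E (~: S) (f (v, b)).
Proof.
move=> vA.
set L := setX [set a in ~: shadow S | e a v] [set b].
set F := setX [set v] [set d in setT | e' d b].
have cardL : #|L| = nbr_in e (~: shadow S) v by rewrite cardsX cards1 muln1.
have cardF : #|F| = degree e' b by rewrite cardsX cards1 mul1n.
have LF0 : L :&: F = set0.
  apply/setP => -[a d]; rewrite !inE /=.
  by apply/negP => /andP [/andP [_ /eqP ->] /andP [_ ebb]]; rewrite e'_irr in ebb.
have cardLF : #|L :|: F| = #|L| + #|F| by rewrite cardsU LF0 cards0 subn0.
rewrite -cardL -cardF -cardLF.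
rewrite -(card_imset _ (can_inj fK)); apply: subset_leq_card.
apply/subsetP => _ /imsetP [[a d] /setUP [] adLF ->]; move: adLF; rewrite !inE /=.
  case/andP=> /andP [aA eav] /eqP ->; rewrite E_cart eqxx eav /= andbT.
  by apply: contra aA => abS; apply/existsP; exists b.
by case/andP=> /eqP -> edb; rewrite E_cart eqxx edb orbT andbT notin_shadow.
Qed.

Lemma oaf_cylinder (k : int) (X : {set T}) :
  oaf_set e (k + (mindeg e')%:Z)%R X -> oaf_set E k (f @: setX X setT).
Proof.
move=> /forallP oafX; apply/forallP => S; apply/implyP => sSX.
apply/negP => /andP [S0 /forallP allianceS].
have := oafX (shadow S); rewrite shadow_sub //= /off_alliance shadow_neq0 //=.
case/forallPn => v; rewrite negb_imply -ltNge inE in_setC => /andP [/andP [vA]].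
case/existsP => u /andP [uA euv] violated_v.
have /existsP [b ubS] : [exists b, f (u, b) \in S] by rewrite inE in uA.
have w_bd : f (v, b) \in boundary E S.
  rewrite inE in_setC notin_shadow //=; apply/existsP; exists (f (u, b)).
  by rewrite ubS E_cart eqxx euv.
have := allianceS (f (v, b)); rewrite w_bd /= => alliance_w.
have in_le := nbr_in_layer b vA.
have out_ge := nbr_out_layer b vA.
have deg_ge := mindeg_le_degree e' b.
lia.
Qed.

Lemma phi_o_cylinder (k : int) :
  #|T'| * phi_o e (k + (mindeg e')%:Z)%R <= phi_o E k.
Proof.
set k' := (k + (mindeg e')%:Z)%R.
have oaf_nonempty : 0 < #|[pred X : {set T} | oaf_set e k' X]|.
  by apply/card_gt0P; exists set0; rewrite inE oaf_set0.
rewrite /phi_o.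
have [X oafX ->] := eq_bigmax_cond (fun X : {set T} => #|X|) oaf_nonempty.
rewrite mulnC -cardsT -cardsX -(card_imset _ (can_inj fK)).
exact/leq_bigmax_cond/oaf_cylinder.
Qed.

End CartesianProduct.

Theorem corollary3 (T1 T2 : finType) (e1 : rel T1) (e2 : rel T2)
    (g1 : simple_graph e1) (g2 : simple_graph e2) :
  (forall k : int,
     (2%:Z - (mindeg e2)%:Z - (maxdeg e1)%:Z <= k)%R ->
     (k <= (maxdeg e1)%:Z - (mindeg e2)%:Z)%R ->
     #|T2| * phi_o e1 (k + (mindeg e2)%:Z)%R <= phi_o (cart_rel e1 e2) k)
  /\
  (forall k : int,
     (2%:Z - (mindeg e1)%:Z - (maxdeg e2)%:Z <= k)%R ->
     (k <= (maxdeg e2)%:Z - (mindeg e1)%:Z)%R ->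
     #|T1| * phi_o e2 (k + (mindeg e1)%:Z)%R <= phi_o (cart_rel e1 e2) k).
Proof.
have [[_ irr1] [_ irr2]] := (g1, g2).
split=> k _ _.
-
  have idK : cancel (@id (T1 * T2)) id by [].
  apply: (phi_o_cylinder idK idK _ irr2) => a b c d.
  by rewrite /= orbC.
-
  pose swap (A B : Type) (x : A * B) := (x.2, x.1).
  have swapK (A B : Type) : cancel (@swap A B) (@swap B A) by case.
  by apply: (phi_o_cylinder (swapK _ _) (swapK _ _) _ irr1).
Qed.
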